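(* Let $M$ be a locally-finite map in $\mathbb{E}^2$ with exactly one end such that $V(M)$ is a locally finite collection of vertices, and suppose $G\le\mathrm{Isom}(\mathbb{E}^2)$ acts quasi-transitively on $M$. Then $G$ is a wallpaper group.
   Context: A map $M$ in a surface $X$ is a (simple, connected, infinite) graph embedded in $X$: vertices are distinct points, edges are curves meeting only at common endpoints, and each face is homeomorphic to an open disc. Locally-finite and number of ends refer to the underlying graph. $V(M)$ is a locally finite collection of vertices if every compact subset contains only finitely many vertices of $M$. $G$ acts on $M$ if each $g\in G$ maps $V(M)$ to itself inducing a graph automorphism (and maps the embedded map to itself); quasi-transitively means finitely many orbits on $V(M)$. A wallpaper group is a discrete group of isometries of $\mathbb{E}^2$ containing two linearly independent translations. *)

From HB Require Import structures.
From mathcomp Require Import all_boot all_order all_algebra.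
From mathcomp Require Import all_classical all_reals all_analysis.
From mathcomp Require Import Rstruct Rstruct_topology.
From Stdlib Require Import Relations.
Set Implicit Arguments. Unset Strict Implicit. Unset Printing Implicit Defensive.
Import Order.TTheory GRing.Theory Num.Theory.
Local Open Scope classical_set_scope.
Local Open Scope ring_scope.

Definition plane : Type := (Rdefinitions.R * Rdefinitions.R)%type.

Definition edist (x y : plane) : Rdefinitions.R :=
  Num.sqrt ((x.1 - y.1) ^+ 2 + (x.2 - y.2) ^+ 2).

Definition origin : plane := (0, 0).

Definition is_isometry (f : plane -> plane) : Prop :=
  forall x y, edist (f x) (f y) = edist x y.

Definition isom_subgroup (G : set (plane -> plane)) : Prop :=
  [/\ (forall g, G g -> is_isometry g),
      G id,
      (forall g h, G g -> G h -> G (g \o h)) &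
      (forall g, G g -> exists2 h, G h & (h \o g = id /\ g \o h = id))].

(* Discreteness of G in Isom(E^2) with the compact-open topology
   (= topology of uniform convergence on compacta; closed balls about the
   origin form a cofinal family of compacta). *)
Definition discrete_isom_group (G : set (plane -> plane)) : Prop :=
  forall g, G g -> exists r eps : Rdefinitions.R, 0 < eps /\
    forall h, G h -> (forall x, edist x origin <= r -> edist (h x) (g x) < eps) ->
      h = g.

Definition translation (t : plane) : plane -> plane :=
  fun x => (x.1 + t.1, x.2 + t.2).

Definition lin_indep2 (u v : plane) : Prop :=
  forall a b : Rdefinitions.R,
    (a * u.1 + b * v.1, a * u.2 + b * v.2) = origin -> a = 0 /\ b = 0.

Definition wallpaper_group (G : set (plane -> plane)) : Prop :=
  [/\ isom_subgroup G, discrete_isom_group G &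
      exists u v, [/\ lin_indep2 u v, G (translation u) & G (translation v)]].

Definition arc_between (e : set plane) (u v : plane) : Prop :=
  exists gam : Rdefinitions.R -> plane,
    [/\ {within `[0, 1]%classic, continuous gam},
        {in `[0, 1]%classic &, injective gam},
        e = gam @` `[0, 1]%classic, gam 0 = u & gam 1 = v].

Record embedded_graph := EmbGraph {
  vert : set plane;
  edge : set (set plane)
}.

Definition adj (M : embedded_graph) (u v : plane) : Prop :=
  vert M u /\ vert M v /\ exists2 e, edge M e & arc_between e u v.

Definition drawing (M : embedded_graph) : set plane :=
  vert M `|` \bigcup_(e in edge M) e.

Definition open_disc : set plane := [set x | edist x origin < 1].

Definition homeomorphic (A B : set plane) : Prop :=
  exists (f g : plane -> plane),
    [/\ (forall x, A x -> B (f x)), (forall y, B y -> A (g y)),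
        (forall x, A x -> g (f x) = x), (forall y, B y -> f (g y) = y) &
        ({within A, continuous f} /\ {within B, continuous g})].

Definition is_face (M : embedded_graph) (F : set plane) : Prop :=
  exists2 x, (~ drawing M x) & F = connected_component (~` drawing M) x.

(* M is a map in E^2 (simple, connected, infinite graph, 2-cell embedded) *)
Definition is_map (M : embedded_graph) : Prop :=
  [/\
      (forall e, edge M e -> exists u v,
         [/\ vert M u, vert M v, u <> v & arc_between e u v]),
      (forall e u v w, edge M e -> arc_between e u v -> vert M w -> e w ->
         w = u \/ w = v),
      (forall e e' u v u' v', edge M e -> edge M e' -> e <> e' ->
         arc_between e u v -> arc_between e' u' v' ->
         forall x, e x -> e' x -> (x = u \/ x = v) /\ (x = u' \/ x = v')) &
      (forall e e' u v, edge M e -> edge M e' ->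
         arc_between e u v -> arc_between e' u v -> e = e')] /\
  [/\
      (forall u v, vert M u -> vert M v -> clos_refl_trans _ (adj M) u v),
      ~ finite_set (vert M) &
      (forall F, is_face M F -> homeomorphic F open_disc)].

Definition locally_finite_graph (M : embedded_graph) : Prop :=
  forall v, vert M v -> finite_set [set u | adj M v u].

Definition adj_minus (M : embedded_graph) (S : set plane) (u v : plane) : Prop :=
  adj M u v /\ ~ S u /\ ~ S v.

Definition is_ray (M : embedded_graph) (r : nat -> plane) : Prop :=
  injective r /\ forall i, adj M (r i) (r i.+1).

Definition equiv_rays (M : embedded_graph) (r s : nat -> plane) : Prop :=
  forall S : set plane, finite_set S -> S `<=` vert M ->
    exists i j, [/\ (forall k, (i <= k)%N -> ~ S (r k)),
                    (forall k, (j <= k)%N -> ~ S (s k)) &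
                    clos_refl_trans _ (adj_minus M S) (r i) (s j)].

Definition one_ended (M : embedded_graph) : Prop :=
  (exists r, is_ray M r) /\
  (forall r s, is_ray M r -> is_ray M s -> equiv_rays M r s).

Definition locally_finite_vertices (M : embedded_graph) : Prop :=
  forall K : set plane, compact K -> finite_set (K `&` vert M).

Definition acts_on (G : set (plane -> plane)) (M : embedded_graph) : Prop :=
  forall g, G g -> g @` vert M = vert M /\
                   [set g @` e | e in edge M] = edge M.

Definition quasi_transitive (G : set (plane -> plane)) (M : embedded_graph) : Prop :=
  acts_on G M /\
  finite_set [set O : set plane | exists2 v, vert M v & O = [set g v | g in G]].

(* If the translations in G spanned less than the plane, either G would contain no nontrivial
   translation or all of its translations would be parallel to one vector u.  In the first case
   G fixes a point (the common centre of its rotations) or has at most two elements, so every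
   orbit is bounded; by quasi-transitivity all vertices lie in a bounded box, which contains
   only finitely many of them, contradicting that M is infinite.  In the second case every
   element of G maps u to +-u and either preserves the coordinate along perp u or reflects it in
   a common axis; hence the vertices lie in a strip along u, and edges have bounded length in
   the direction u.  Translating a path from v to v + u (resp. v - u) by multiples of u yields
   two rays escaping to the two ends of the strip, and removing the finitely many vertices in a
   middle window of the strip separates them: M would have two ends.  Discreteness of G follows
   from the local finiteness of V(M): an element of G moving three affinely independent
   vertices by less than their minimal spacing must fix them, and is then the identity. *)

From Pilot Require Import Defs.
From HB Require Import structures.
From mathcomp Require Import all_boot all_order all_algebra.
From mathcomp Require Import all_classical all_reals all_analysis.
From mathcomp Require Import Rstruct Rstruct_topology.
From mathcomp Require Import ring lra zify.
From Stdlib Require Import Relations.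
Set Implicit Arguments. Unset Strict Implicit. Unset Printing Implicit Defensive.
Import Order.TTheory GRing.Theory Num.Theory.
Local Open Scope classical_set_scope.
Local Open Scope ring_scope.

Notation R := Rdefinitions.R.

Definition sqdist (p q : plane) : R := (p.1 - q.1) ^+ 2 + (p.2 - q.2) ^+ 2.
Definition dot (p q : plane) : R := p.1 * q.1 + p.2 * q.2.
Definition cross (p q : plane) : R := p.1 * q.2 - p.2 * q.1.
Definition perp (u : plane) : plane := (- u.2, u.1).
Definition dilate (k : R) (p : plane) : plane := (k * p.1, k * p.2).

Lemma plane_ext (p q : plane) : p.1 = q.1 -> p.2 = q.2 -> p = q.
Proof. by case: p q => p1 p2 [q1 q2] /= -> ->. Qed.

Lemma addpE (p q : plane) : p + q = (p.1 + q.1, p.2 + q.2).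
Proof. by []. Qed.

Lemma opppE (p : plane) : - p = (- p.1, - p.2).
Proof. by []. Qed.

Lemma sqr_eq1_norm (l : R) : l ^+ 2 = 1 -> `|l| = 1.
Proof. by move/eqP; rewrite sqrf_eq1 => /orP[] /eqP ->; rewrite ?normrN normr1. Qed.

Lemma sqdist_ge0 p q : 0 <= sqdist p q.
Proof. by rewrite addr_ge0 // sqr_ge0. Qed.

Lemma sqdist_eq0 p q : sqdist p q = 0 -> p = q.
Proof.
case: p q => [p1 p2] [q1 q2]; rewrite /sqdist /= => /eqP.
by rewrite paddr_eq0 ?sqr_ge0 // !sqrf_eq0 !subr_eq0 => /andP[/eqP -> /eqP ->].
Qed.

Lemma dotC p q : dot p q = dot q p.
Proof. by rewrite /dot mulrC [p.2 * _]mulrC. Qed.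

Lemma dotDl p q c : dot (p + q) c = dot p c + dot q c.
Proof. rewrite /dot /=; ring. Qed.

Lemma dotNr p c : dot p (- c) = - dot p c.
Proof. rewrite /dot /=; ring. Qed.

Lemma dot_dilatel k p c : dot (dilate k p) c = k * dot p c.
Proof. rewrite /dot /=; ring. Qed.

Lemma dot_dilater k p c : dot p (dilate k c) = k * dot p c.
Proof. rewrite /dot /=; ring. Qed.

Lemma dot0l c : dot origin c = 0.
Proof. rewrite /dot /=; ring. Qed.

Lemma dot_mulrnl (p c : plane) m : dot (p *+ m) c = m%:R * dot p c.
Proof.
elim: m => [|m IH]; first by rewrite mulr0n mul0r dot0l.
by rewrite mulrS dotDl IH mulrS mulrDl mul1r.
Qed.

Lemma dot_perp u : dot u (perp u) = 0.
Proof. rewrite /dot /=; ring. Qed.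

Lemma dot_perp_perp u : dot (perp u) (perp u) = dot u u.
Proof. rewrite /dot /=; ring. Qed.

Lemma dot_perp_cross u w : dot w (perp u) = cross u w.
Proof. rewrite /dot /cross /=; ring. Qed.

Lemma dot_gt0 u : u <> origin -> 0 < dot u u.
Proof.
case: u => u1 u2 hu; rewrite lt_def /dot /= addr_ge0 ?sqr_ge0 -?expr2 // andbT.
apply/eqP => /eqP; rewrite paddr_eq0 ?sqr_ge0 // !sqrf_eq0 => /andP[/eqP e1 /eqP e2].
by apply: hu; rewrite e1 e2.
Qed.

Lemma dot_perp_inj u p q : dot u u != 0 ->
  dot p u = dot q u -> dot p (perp u) = dot q (perp u) -> p = q.
Proof.
case: p q u => [p1 p2] [q1 q2] [u1 u2]; rewrite /dot /= => hu h1 h2.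
have e1 : (p1 - q1) * (u1 * u1 + u2 * u2) =
   u1 * ((p1 * u1 + p2 * u2) - (q1 * u1 + q2 * u2))
   - u2 * ((p1 * - u2 + p2 * u1) - (q1 * - u2 + q2 * u1)) by ring.
have e2 : (p2 - q2) * (u1 * u1 + u2 * u2) =
   u2 * ((p1 * u1 + p2 * u2) - (q1 * u1 + q2 * u2))
   + u1 * ((p1 * - u2 + p2 * u1) - (q1 * - u2 + q2 * u1)) by ring.
rewrite h1 h2 !subrr !mulr0 subr0 in e1; rewrite h1 h2 !subrr !mulr0 addr0 in e2.
move/eqP: e1; rewrite mulf_eq0 (negbTE hu) orbF subr_eq0 => /eqP ->.
by move/eqP: e2; rewrite mulf_eq0 (negbTE hu) orbF subr_eq0 => /eqP ->.
Qed.

Lemma cross_neq0_lin_indep2 u w : cross u w != 0 -> lin_indep2 u w.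
Proof.
rewrite /cross => hd a b e.
have e1 := congr1 fst e; have e2 := congr1 snd e; rewrite /origin /= in e1 e2.
have ea : a * (u.1 * w.2 - u.2 * w.1) = w.2 * (a * u.1 + b * w.1) - w.1 * (a * u.2 + b * w.2)
  by ring.
have eb : b * (u.1 * w.2 - u.2 * w.1) = u.1 * (a * u.2 + b * w.2) - u.2 * (a * u.1 + b * w.1)
  by ring.
rewrite e1 e2 !mulr0 subrr in ea eb.
move/eqP: ea; rewrite mulf_eq0 (negbTE hd) orbF => /eqP ->.
by move/eqP: eb; rewrite mulf_eq0 (negbTE hd) orbF => /eqP ->.
Qed.

Lemma lin_indep2_cross_neq0 u w : lin_indep2 u w -> cross u w != 0.
Proof.
rewrite /cross => hi; apply/eqP => hd.
have [_ u2] : w.2 = 0 /\ - u.2 = 0.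
  apply: (hi w.2 (- u.2)); rewrite /origin; congr pair; last by ring.
  by rewrite -hd; ring.
have [_ u1] : w.1 = 0 /\ - u.1 = 0.
  apply: (hi w.1 (- u.1)); rewrite /origin; congr pair; first by ring.
  by rewrite -oppr0 -hd; ring.
have [/eqP + _] : (1 : R) = 0 /\ (0 : R) = 0.
  by apply: (hi 1 0); rewrite /origin; congr pair; lra.
by rewrite oner_eq0.
Qed.

Lemma cross_dot_sqr p q : cross p q ^+ 2 + dot p q ^+ 2 = dot p p * dot q q.
Proof. rewrite /cross /dot; ring. Qed.

Lemma orthonormal_expansion b1 b2 x :
  dot b1 b1 = 1 -> dot b2 b2 = 1 -> dot b1 b2 = 0 ->
  x = dilate (dot x b1) b1 + dilate (dot x b2) b2.
Proof.
case: b1 b2 x => [a c] [b d] [x1 x2]; rewrite /dot /= => h1 h2 h3.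
(* The orthogonal matrix with columns [b1], [b2] also has orthonormal rows. *)
have ecb : c * c - b * b = b * b * (a * a + c * c - 1) - c * c * (b * b + d * d - 1)
   - (a * b - c * d) * (a * b + c * d) by ring.
have eac : a * c + b * d = (a * b + c * d) * (a * d + b * c)
   + a * c * (1 - (b * b + d * d)) + b * d * (1 - (a * a + c * c)) by ring.
rewrite h1 h2 h3 !subrr ?mulr0 ?mul0r ?subr0 ?addr0 in ecb eac.
apply: plane_ext => /=.
  have -> : (x1 * a + x2 * c) * a + (x1 * b + x2 * d) * b
    = x1 * (a * a + b * b) + x2 * (a * c + b * d) by ring.
  have -> : a * a + b * b = 1 by lra.
  by rewrite eac mulr0 addr0 mulr1.
have -> : (x1 * a + x2 * c) * c + (x1 * b + x2 * d) * d
  = x1 * (a * c + b * d) + x2 * (c * c + d * d) by ring.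
have -> : c * c + d * d = 1 by lra.
by rewrite eac mulr0 add0r mulr1.
Qed.

Lemma basis_decomposition u v w : cross u v != 0 ->
  w = dilate (cross w v / cross u v) u + dilate (cross u w / cross u v) v.
Proof. by move=> huv; rewrite addpE; apply: plane_ext; rewrite /= /cross; field. Qed.

(** * Isometries of the plane *)

Lemma isometry_sqdist g : is_isometry g -> forall p q, sqdist (g p) (g q) = sqdist p q.
Proof.
move=> hg p q.
have e : Num.sqrt (sqdist (g p) (g q)) = Num.sqrt (sqdist p q) := hg p q.
by rewrite -(sqr_sqrtr (sqdist_ge0 (g p) (g q))) e sqr_sqrtr // sqdist_ge0.
Qed.

Lemma isometry_inj g : is_isometry g -> injective g.
Proof.
move=> hg p q e; apply: sqdist_eq0.
by rewrite -(isometry_sqdist hg) e /sqdist !subrr expr0n /= addr0.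
Qed.

Definition colx (g : plane -> plane) : plane := g (1, 0) - g origin.
Definition coly (g : plane -> plane) : plane := g (0, 1) - g origin.
(* Kept folded: [simpl] would expose the pair subtraction in a form [ring] cannot parse. *)
Arguments colx : simpl never.
Arguments coly : simpl never.
Definition lin (g : plane -> plane) (w : plane) : plane :=
  dilate w.1 (colx g) + dilate w.2 (coly g).
Definition det (g : plane -> plane) : R := cross (colx g) (coly g).

Lemma linD g (p q : plane) : lin g (p + q) = lin g p + lin g q.
Proof. by rewrite /lin !addpE; apply: plane_ext => /=; ring. Qed.

Lemma lin_dilate g k p : lin g (dilate k p) = dilate k (lin g p).
Proof. by rewrite /lin; move: (colx g) (coly g) => a b; apply: plane_ext => /=; ring. Qed.

Lemma cross_lin g p q : cross (lin g p) (lin g q) = det g * cross p q.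
Proof. by rewrite /det /cross /lin; move: (colx g) (coly g) => a b /=; ring. Qed.

Lemma isometry_dot g : is_isometry g ->
  forall p q, dot (g p - g origin) (g q - g origin) = dot p q.
Proof.
move=> hg p q.
have := isometry_sqdist hg p q; have := isometry_sqdist hg p origin.
have := isometry_sqdist hg q origin; rewrite /sqdist /dot /origin /=.
nra.
Qed.

Section Isometry.
Variable g : plane -> plane.
Hypothesis hg : is_isometry g.

Lemma isometry_cols : [/\ dot (colx g) (colx g) = 1, dot (coly g) (coly g) = 1
  & dot (colx g) (coly g) = 0].
Proof. by rewrite /colx /coly !(isometry_dot hg) /dot /=; split; ring. Qed.

Lemma isometry_affine p : g p = lin g p + g origin.
Proof.
have [h11 h22 h12] := isometry_cols.
rewrite -[g p](subrK (g origin)); congr (_ + _).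
rewrite [LHS](orthonormal_expansion _ h11 h22 h12) /colx /coly !(isometry_dot hg).
by congr (dilate _ _ + dilate _ _); rewrite /dot /=; ring.
Qed.

Lemma lin_isometry p : lin g p = g p - g origin.
Proof. by rewrite [g p]isometry_affine addrK. Qed.

Lemma isometryD p w : g (p + w) = g p + lin g w.
Proof. by rewrite [g (p + w)]isometry_affine [g p]isometry_affine linD addrAC. Qed.

Lemma lin_dot p q : dot (lin g p) (lin g q) = dot p q.
Proof. by rewrite !lin_isometry (isometry_dot hg). Qed.

Lemma det_pm1 : det g = 1 \/ det g = -1.
Proof.
have [h11 h22 h12] := isometry_cols.
have := cross_dot_sqr (colx g) (coly g); rewrite h11 h22 h12 expr0n addr0 mulr1 => /eqP.
by rewrite sqrf_eq1 => /orP[] /eqP; [left | right].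
Qed.

Lemma coly_isometry : coly g = dilate (det g) (perp (colx g)).
Proof.
have [h11 h22 h12] := isometry_cols.
have hp : dot (perp (colx g)) (perp (colx g)) = 1 by rewrite dot_perp_perp.
rewrite [LHS](orthonormal_expansion _ h11 hp (dot_perp _)) dotC h12 /det.
by apply: plane_ext; rewrite /cross /dot /=; ring.
Qed.

End Isometry.

Lemma isometry_comp g h : is_isometry g -> is_isometry h -> is_isometry (g \o h).
Proof. by move=> hg hh x y /=; rewrite hg hh. Qed.

Lemma lin_comp g h : is_isometry g -> is_isometry h ->
  forall w, lin (g \o h) w = lin g (lin h w).
Proof.
move=> hg hh w; rewrite (lin_isometry (isometry_comp hg hh)) /=.
by rewrite [h w](isometry_affine hh) [lin h w + _]addrC (isometryD hg) addrC addKr.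
Qed.

Lemma lin_ex f : lin f (1, 0) = colx f.
Proof. by rewrite /lin; move: (colx f) (coly f) => a b; apply: plane_ext => /=; ring. Qed.

Lemma lin_ey f : lin f (0, 1) = coly f.
Proof. by rewrite /lin; move: (colx f) (coly f) => a b; apply: plane_ext => /=; ring. Qed.

Lemma det_comp g h : is_isometry g -> is_isometry h -> det (g \o h) = det g * det h.
Proof.
move=> hg hh; rewrite /det -lin_ex -lin_ey !(lin_comp hg hh) lin_ex lin_ey.
exact: cross_lin.
Qed.

Lemma lin_rotation_comm g h : is_isometry g -> is_isometry h -> det g = 1 -> det h = 1 ->
  forall w, lin g (lin h w) = lin h (lin g w).
Proof.
move=> hg hh dg dh w; rewrite /lin !(coly_isometry hg) !(coly_isometry hh) dg dh.
by move: (colx g) (colx h) => a b; apply: plane_ext => /=; ring.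
Qed.

Lemma dot_isometry g : is_isometry g ->
  forall p c, dot (g p) c = dot (lin g p) c + dot (g origin) c.
Proof. by move=> hg p c; rewrite (isometry_affine hg p) dotDl. Qed.

Lemma lin_id w : lin id w = w.
Proof.
rewrite /lin /colx /coly /= !addpE !opppE /origin /=.
by case: w => w1 w2; apply: plane_ext => /=; ring.
Qed.

Lemma det_id : det id = 1.
Proof. by rewrite /det /colx /coly /cross !addpE !opppE /origin /=; ring. Qed.

Lemma lin_rotationE r : is_isometry r -> det r = 1 ->
  forall w, lin r w = ((colx r).1 * w.1 - (colx r).2 * w.2, (colx r).2 * w.1 + (colx r).1 * w.2).
Proof.
move=> hr d1 w; rewrite /lin (coly_isometry hr) d1.
by move: (colx r) => a; apply: plane_ext => /=; ring.
Qed.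

Lemma rotation_fixpoint r : is_isometry r -> det r = 1 -> ~ (forall w, lin r w = w) ->
  (exists c, r c = c) /\ (forall p q, r p = p -> r q = q -> p = q).
Proof.
move=> hr d1 rn; have [h11 _ _] := isometry_cols hr.
have rE p : r p = lin r p + r origin := isometry_affine hr p.
rewrite /dot in h11; move: rE (lin_rotationE hr d1) rn h11.
move: (colx r) (r origin) => [a c] [e1 e2] /= rE linE rn h11.
have a_lt1 : a < 1.
  rewrite lt_neqAle (_ : a <= 1) ?andbT; last by nra.
  apply/eqP => a1; apply: rn => w; have c0 : c = 0 by nra.
  by rewrite linE a1 c0; apply: plane_ext => /=; ring.
set D := (1 - a) ^+ 2 + c ^+ 2.
have D_neq0 : D != 0 by rewrite gt_eqF // /D; nra.
split.
  (* Cramer's rule for [(1 - A) c = r origin], [A] the rotation matrix. *)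
  exists (((1 - a) * e1 - c * e2) / D, (c * e1 + (1 - a) * e2) / D).
  by rewrite rE linE addpE; apply: plane_ext => /=; rewrite /D; field.
move=> [p1 p2] [q1 q2]; rewrite !rE !linE !addpE /= => hp hq.
have [hp1 hp2] := (congr1 fst hp, congr1 snd hp).
have [hq1 hq2] := (congr1 fst hq, congr1 snd hq); rewrite /= in hp1 hp2 hq1 hq2.
have hD : cross (1 - a, - c) (c, 1 - a) != 0.
  by rewrite /cross /= (_ : _ - _ = D) // /D; ring.
have [/eqP + /eqP] := @cross_neq0_lin_indep2 _ _ hD (p1 - q1) (p2 - q2)
  (ltac:(apply: plane_ext => /=; lra)).
by rewrite !subr_eq0 => /eqP -> /eqP ->.
Qed.

Lemma translationE t x : translation t x = x + t.
Proof. by []. Qed.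

Lemma translation_comp a b : translation a \o translation b = translation (a + b).
Proof. by apply: funext => x; rewrite /= !translationE -addrA [b + a]addrC. Qed.

Lemma lin_translation_id g : is_isometry g -> (forall w, lin g w = w) ->
  g = translation (g origin).
Proof. by move=> hg hl; apply: funext => x; rewrite (isometry_affine hg) hl. Qed.

Lemma isometry_fixing_triangle k w u v : is_isometry k -> cross u v != 0 ->
  k w = w -> k (w + u) = w + u -> k (w + v) = w + v -> k = id.
Proof.
move=> hk huv kw kwu kwv.
have lin_fix z : k (w + z) = w + z -> lin k z = z.
  by rewrite (isometryD hk) kw => /addrI.
have lin_k_id z : lin k z = z.
  by rewrite (basis_decomposition z huv) linD !lin_dilate !lin_fix.
apply: funext => x; rewrite (lin_translation_id hk lin_k_id) translationE.
have := kw; rewrite (isometry_affine hk) lin_k_id => /(canRL (addKr w)).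
by rewrite addNr => ->; rewrite addr0.
Qed.

Section AffineContinuity.
Import numFieldNormedType.Exports.

Lemma affine_continuous (K : realType) (a b c d e1 e2 : K) :
  continuous (fun p : K * K => (a * p.1 + b * p.2 + e1, c * p.1 + d * p.2 + e2)).
Proof.
have hlin (a' b' e : K) (x : K * K) :
    (fun p : K * K => a' * p.1 + b' * p.2 + e) @ nbhs x --> a' * x.1 + b' * x.2 + e.
  have h1 : (fun p : K * K => a' * p.1) @ nbhs x --> a' * x.1.
    by apply: cvgM; [exact: cvg_cst | exact: cvg_fst].
  have h2 : (fun p : K * K => b' * p.2) @ nbhs x --> b' * x.2.
    by apply: cvgM; [exact: cvg_cst | exact: cvg_snd].
  exact: cvgD (cvgD h1 h2) (cvg_cst e).
move=> x; exact: (@cvg_pair _ _ _ _ (nbhs (_ : K)) (nbhs (_ : K)) _ _ _ _ _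
  (hlin _ _ _ x) (hlin _ _ _ x)).
Qed.

End AffineContinuity.

Lemma isometry_continuous g : is_isometry g -> continuous g.
Proof.
move=> hg; have -> : g = fun p : plane =>
    ((colx g).1 * p.1 + (coly g).1 * p.2 + (g origin).1,
     (colx g).2 * p.1 + (coly g).2 * p.2 + (g origin).2).
  by apply: funext => p; rewrite [LHS](isometry_affine hg); apply: plane_ext => /=; ring.
exact: affine_continuous.
Qed.

Lemma arc_between_isometry g e u v : is_isometry g -> arc_between e u v ->
  arc_between (g @` e) (g u) (g v).
Proof.
move=> hg [gam [hc hi -> h0 h1]]; exists (g \o gam); split.
- by apply: within_continuous_comp => // y _; apply: isometry_continuous.
- by move=> x y hx hy /= /(isometry_inj hg); apply: hi.
- by rewrite image_comp.
- by rewrite /= h0.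
- by rewrite /= h1.
Qed.

Section GroupAction.
Variable G : set (plane -> plane).
Hypothesis hG : isom_subgroup G.

Lemma group_isometry g : G g -> is_isometry g.
Proof. by case: hG => H _ _ _; apply: H. Qed.

Lemma group_id : G id.
Proof. by case: hG. Qed.

Lemma group_comp g h : G g -> G h -> G (g \o h).
Proof. by case: hG => _ _ H _; apply: H. Qed.

Lemma group_inv g : G g -> exists2 h, G h & h \o g = id /\ g \o h = id.
Proof. by case: hG => _ _ _ H; apply: H. Qed.

Lemma group_translation_conj g t : G g -> G (translation t) ->
  G (translation (lin g t)).
Proof.
move=> hg ht; have [h hh [_ gh]] := group_inv hg.
have -> : translation (lin g t) = g \o (translation t \o h).
  apply: funext => x /=; rewrite translationE (isometryD (group_isometry hg)).
  by have /= -> := congr1 (fun f => f x) gh.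
by apply: group_comp => //; apply: group_comp.
Qed.

Lemma group_translationN t : G (translation t) -> G (translation (- t)).
Proof.
move=> ht; have [h hh [ht' _]] := group_inv ht.
suff -> : translation (- t) = h by [].
apply: funext => x; have /= := congr1 (fun f => f (x - t)) ht'.
by rewrite translationE subrK => ->.
Qed.

Lemma group_translationMn t n : G (translation t) -> G (translation (t *+ n)).
Proof.
move=> ht; elim: n => [|n IH].
  have -> : translation (t *+ 0) = id by apply: funext => x; rewrite translationE addr0.
  exact: group_id.
by rewrite mulrS -translation_comp; apply: group_comp.
Qed.

Variable M : embedded_graph.
Hypothesis hact : acts_on G M.

Lemma act_vert g p : G g -> vert M p -> vert M (g p).
Proof. by move=> hg hp; have [<- _] := hact hg; exists p. Qed.

Lemma act_adj g p q : G g -> adj M p q -> adj M (g p) (g q).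
Proof.
move=> hg [hp [hq [e he harc]]]; split; first exact: act_vert.
split; first exact: act_vert.
exists (g @` e); last exact: arc_between_isometry (group_isometry hg) harc.
by have [_ <-] := hact hg; exists e.
Qed.

End GroupAction.

Lemma finite_set_ubound (T : eqType) (F : set T) (Q : T -> R -> Prop) :
  finite_set F -> (forall x, F x -> exists B, forall B', B <= B' -> Q x B') ->
  exists B, forall B', B <= B' -> forall x, F x -> Q x B'.
Proof.
move=> /finite_seqP[s ->]; elim: s => [|y s IH] h; first by exists 0.
have [B1 hB1] := h y (mem_head _ _).
have [B2 hB2] := IH (fun x hx => h x (ltac:(by rewrite /= inE hx orbT))).
exists (Num.max B1 B2) => B'; rewrite ge_max => /andP[h1 h2] x.
by rewrite /= inE => /orP[/eqP -> | hx]; [apply: hB1 | apply: hB2].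
Qed.

Definition in_box (C : R) (p : plane) : Prop := `|p.1| <= C /\ `|p.2| <= C.

Lemma vertices_in_box_finite (M : embedded_graph) (C : R) : locally_finite_vertices M ->
  finite_set [set p | vert M p /\ in_box C p].
Proof.
move=> hlf; have hK : compact (`[-C, C]%classic `*` `[-C, C]%classic : set plane).
  by apply: compact_setX; apply: segment_compact.
apply: sub_finite_set (hlf _ hK) => -[x y] /= [hv [hx hy]].
by split => //; split; rewrite /= in_itv /= -ler_norml.
Qed.

Lemma edist_pos p q : p <> q -> 0 < Defs.edist p q.
Proof.
move=> pq; rewrite sqrtr_gt0 lt_def sqdist_ge0 andbT.
by apply/eqP => /sqdist_eq0.
Qed.

Lemma finite_set_separated (F : set plane) : finite_set F ->
  exists2 e, 0 < e & forall p q, F p -> F q -> p <> q -> e <= Defs.edist p q.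
Proof.
move=> hF.
have [B hB] : exists B, forall B', B <= B' ->
    forall p, F p -> forall q, F q -> p <> q -> 1 <= B' * Defs.edist p q.
  apply: finite_set_ubound => // p _.
  have hq q : F q -> exists B, forall B', B <= B' -> p <> q -> 1 <= B' * Defs.edist p q.
    move=> _; exists (Defs.edist p q)^-1 => B' hB' pq.
    rewrite -(mulVf (lt0r_neq0 (edist_pos pq))).
    by rewrite ler_wpM2r // sqrtr_ge0.
  have [B hB] := finite_set_ubound hF hq.
  by exists B => B' hB' q hq'; apply: hB.
exists (Num.max B 1)^-1; first by rewrite invr_gt0 lt_max ltr01 orbT.
move=> p q hp hq pq; rewrite -div1r ler_pdivrMr ?lt_max ?ltr01 ?orbT // mulrC.
by apply: hB => //; rewrite le_max lexx.
Qed.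

Lemma edist_coord p q : `|p.1 - q.1| <= Defs.edist p q /\ `|p.2 - q.2| <= Defs.edist p q.
Proof.
split; rewrite -sqrtr_sqr; apply: ler_wsqrtr.
  by rewrite /sqdist lerDl sqr_ge0.
by rewrite /sqdist lerDr sqr_ge0.
Qed.

Lemma in_box_edist p q : in_box (`|q.1| + `|q.2| + Defs.edist p q) p.
Proof.
have [d1 d2] := edist_coord p q; have n1 := normr_ge0 q.1; have n2 := normr_ge0 q.2.
have t1 := ler_normD q.1 (p.1 - q.1); have t2 := ler_normD q.2 (p.2 - q.2).
rewrite !subrKC in t1 t2; rewrite /in_box; split; lra.
Qed.

Lemma in_box_of_dots (u p : plane) (D B : R) : 0 < dot u u ->
  `|dot p u| <= D -> `|dot p (perp u)| <= B ->
  in_box ((D + B) * (`|u.1| + `|u.2|) / dot u u) p.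
Proof.
move=> hu hX hY.
have e1 : p.1 * dot u u = dot p u * u.1 - dot p (perp u) * u.2 by rewrite /dot /=; ring.
have e2 : p.2 * dot u u = dot p u * u.2 + dot p (perp u) * u.1 by rewrite /dot /=; ring.
have n1 := normr_ge0 u.1; have n2 := normr_ge0 u.2.
have D0 : 0 <= D := le_trans (normr_ge0 _) hX.
have B0 : 0 <= B := le_trans (normr_ge0 _) hY.
split; rewrite ler_pdivlMr // -(gtr0_norm hu) -normrM ?e1 ?e2.
  apply: le_trans (ler_normB _ _) _; rewrite !normrM.
  have := ler_pM (normr_ge0 _) n1 hX (lexx `|u.1|).
  have := ler_pM (normr_ge0 _) n2 hY (lexx `|u.2|); nra.
apply: le_trans (ler_normD _ _) _; rewrite !normrM.
have := ler_pM (normr_ge0 _) n2 hX (lexx `|u.2|).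
have := ler_pM (normr_ge0 _) n1 hY (lexx `|u.1|); nra.
Qed.

(** * Rays *)

Definition to_pinfty (f : nat -> R) : Prop :=
  forall K, exists N, forall k, (N <= k)%N -> K < f k.

Definition graph_connected (M : embedded_graph) : Prop :=
  forall u v, vert M u -> vert M v -> clos_refl_trans _ (adj M) u v.

Lemma clos_rt_walk (T : Type) (rel : T -> T -> Prop) x y : clos_refl_trans _ rel x y ->
  exists n (p : nat -> T),
    [/\ p 0%N = x, p n = y & forall i, (i < n)%N -> rel (p i) (p i.+1)].
Proof.
move=> /clos_rt_rt1n_iff; elim => [z|z1 z2 z3 h12 _ [n [p [p0 pn hp]]]].
  by exists 0%N, (fun _ => z).
exists n.+1, (fun i => if i is i'.+1 then p i' else z1); split => //.
by case=> [|i] /= hi; [rewrite p0 | apply: hp].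
Qed.

Lemma last_occurrence (T : Type) (w : nat -> T) k :
  (exists N, forall j, (N <= j)%N -> w j <> w k) ->
  exists j, [/\ w j = w k, (k <= j)%N & forall i, w i = w k -> (i <= j)%N].
Proof.
move=> [N hN].
have exP : exists i, `[< w i = w k >] by exists k; apply/asboolP.
have ubP i : `[< w i = w k >] -> (i <= N)%N.
  move=> /asboolP wi; rewrite leqNgt; apply/negP => /ltnW/hN; exact.
case: (ex_maxnP exP ubP) => j /asboolP wj jmax.
by exists j; split => // [|i /asboolP/jmax]; [apply: jmax; apply/asboolP |].
Qed.

(* Jumping each time past the last visit of the current point. *)
Lemma ray_of_walk (T : Type) (w : nat -> T) (rel : T -> T -> Prop) :
  (forall k, rel (w k) (w k.+1)) ->
  (forall k, exists N, forall j, (N <= j)%N -> w j <> w k) ->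
  exists a : nat -> nat, [/\ forall n, (n <= a n)%N, injective (w \o a) &
    forall n, rel (w (a n)) (w (a n.+1))].
Proof.
move=> hrel hfin.
have [lst hlst] := choice (fun k => last_occurrence (hfin k)).
pose a := fix a n := if n is n'.+1 then lst (a n').+1 else lst 0%N.
have ainc n : (a n < a n.+1)%N by case: (hlst (a n).+1).
have amono : {homo a : m n / (m < n)%N} by apply: homo_ltn => // m n p; apply: ltn_trans.
have alast m i : w i = w (a m) -> (i <= a m)%N.
  by case: m => [|m] hi; [case: (hlst 0%N) | case: (hlst (a m).+1)] => e _; apply; rewrite hi e.
exists a; split.
- by elim=> // n IH; apply: leq_ltn_trans IH (ainc n).
- move=> m n /= e; case: (ltngtP m n) => // /amono lt;
    [move: (alast m _ (esym e)) | move: (alast n _ e)]; by rewrite leqNgt lt.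
- by move=> n /=; case: (hlst (a n).+1) => e _ _; rewrite e.
Qed.

Lemma ray_of_escaping_walk (M : embedded_graph) (w : nat -> plane) (X : plane -> R) :
  (forall k, adj M (w k) (w k.+1)) -> to_pinfty (X \o w) ->
  exists2 r, is_ray M r & to_pinfty (X \o r).
Proof.
move=> hw hX.
have hfin k : exists N, forall j, (N <= j)%N -> w j <> w k.
  have [N hN] := hX (X (w k)); exists N => j /hN /= + e.
  by rewrite e ltxx.
have [a [ha ainj aadj]] := ray_of_walk hw hfin.
exists (w \o a) => // K; have [N hN] := hX K.
by exists N => k hk; apply: hN; apply: leq_trans hk (ha k).
Qed.

Lemma lbound_upto (n : nat) (f : nat -> R) : exists B, forall i, (i <= n)%N -> B <= f i.
Proof.
elim: n => [|n [B hB]]; first by exists (f 0%N) => i; rewrite leqn0 => /eqP ->.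
exists (Num.min B (f n.+1)) => i; rewrite leq_eqVlt => /orP[/eqP ->|hi].
  by rewrite ge_min lexx orbT.
by apply: le_trans (hB i hi); rewrite ge_min lexx.
Qed.

Lemma exists_natrM_gt (B c K : R) : 0 < c -> exists m : nat, K < B + m%:R * c.
Proof.
move=> hc; have hx := normr_ge0 ((K - B) / c).
exists (Num.bound `|(K - B) / c|).
have : (K - B) / c < (Num.bound `|(K - B) / c|)%:R.
  exact: le_lt_trans (ler_norm _) (archi_boundP hx).
rewrite ltr_pdivrMr //; lra.
Qed.

Lemma translation_ray (G : set (plane -> plane)) (M : embedded_graph) t v0 :
  isom_subgroup G -> acts_on G M -> graph_connected M -> vert M v0 ->
  G (translation t) -> t <> origin ->
  exists2 r, is_ray M r & to_pinfty (fun k => dot (r k) t).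
Proof.
move=> hG hact hconn hv0 ht t0.
have [n [p [p0 pn hp]]] := clos_rt_walk (hconn _ _ hv0 (act_vert hact ht hv0)).
have n0 : (0 < n)%N.
  rewrite lt0n; apply: contra_notN t0 => /eqP n0; move: pn.
  by rewrite n0 p0 translationE => /eqP; rewrite addrC -subr_eq subrr eq_sym => /eqP.
pose w k := translation (t *+ (k %/ n)%N) (p (k %% n)%N).
have hw k : adj M (w k) (w k.+1).
  have ek := divn_eq k n; rewrite /w.
  set q := (k %/ n)%N in ek *; set i := (k %% n)%N in ek *.
  have hq : G (translation (t *+ q)) by apply: group_translationMn.
  have := ltn_pmod k n0; rewrite -/i leq_eqVlt => /orP[/eqP i_last | i_lt].
    have -> : k.+1 = (q.+1 * n)%N by rewrite ek; lia.
    rewrite mulnK // modnMl.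
    have -> : translation (t *+ q.+1) (p 0%N) = translation (t *+ q) (p n).
      by rewrite p0 pn !translationE mulrS addrA.
    rewrite -i_last.
    by apply: (act_adj hG hact hq); apply: hp; rewrite i_last.
  have -> : k.+1 = (q * n + i.+1)%N by rewrite ek addnS.
  rewrite divnMDl // divn_small // addn0 modnMDl modn_small //.
  by apply: (act_adj hG hact hq); apply: hp; apply: ltnW.
have [B hB] := lbound_upto n (fun i => dot (p i) t).
have htt := dot_gt0 t0.
apply: (ray_of_escaping_walk (X := fun x => dot x t) hw) => K.
have [m hm] := exists_natrM_gt B K htt.
exists (m * n)%N => k hk /=; apply: lt_le_trans hm _.
rewrite /w translationE dotDl dot_mulrnl lerD //.
  by apply: hB; apply: ltnW; apply: ltn_pmod.
by rewrite ler_pM2r // ler_nat leq_divRL.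
Qed.

Lemma ray_tail_path (M : embedded_graph) (S : set plane) (f : nat -> plane) m :
  is_ray M f -> (forall k, (m <= k)%N -> ~ S (f k)) ->
  forall k, (m <= k)%N -> clos_refl_trans _ (adj_minus M S) (f m) (f k).
Proof.
move=> [_ hadj] hS; elim=> [|k IH]; first by rewrite leqn0 => /eqP ->; apply: rt_refl.
rewrite leq_eqVlt => /orP[/eqP <-|hk]; first exact: rt_refl.
apply: rt_trans (IH hk) (rt_step _ _ _ _ _); split; first exact: hadj.
by split; apply: hS => //; apply: ltnW.
Qed.

(* Outside the slab [|X| <= D], an edge cannot jump from [X > D] to [X < -D]. *)
Lemma slab_separates_rays (M : embedded_graph) (X : plane -> R) (D : R) r s :
  (forall p q, adj M p q -> `|X p - X q| <= D) ->
  finite_set [set p | vert M p /\ `|X p| <= D] ->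
  is_ray M r -> is_ray M s -> to_pinfty (X \o r) -> to_pinfty (fun k => - X (s k)) ->
  ~ equiv_rays M r s.
Proof.
move=> hD hfin hr hs hrX hsX /(_ _ hfin (fun p => @proj1 _ _)) [i [j [hri hsj hpath]]].
set S := [set p | vert M p /\ `|X p| <= D] in hri hsj hpath.
have same_side p q : clos_refl_trans _ (adj_minus M S) p q -> (D < X p <-> D < X q).
  elim=> [x y [hxy [hx hy]] | // | x y z _ h1 _ h2]; last by rewrite h1 h2.
  have [vx [vy _]] := hxy.
  have ox : D < `|X x| by rewrite ltNge; apply/negP => hle; apply: hx.
  have oy : D < `|X y| by rewrite ltNge; apply/negP => hle; apply: hy.
  move: (hD x y hxy) ox oy; rewrite ler_norml !ltr_normr.
  by move=> /andP[h1 h2] /orP[k1|k1] /orP[k2|k2]; split => ?; lra.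
have D0 : 0 <= D := le_trans (normr_ge0 _) (hD _ _ (proj2 hr 0%N)).
have [N1 hN1] := hrX D; have [N2 hN2] := hsX D.
have r_up : D < X (r i).
  rewrite (same_side _ _ (ray_tail_path hr hri (leq_maxl i N1))).
  exact: (hN1 _ (leq_maxr i N1)).
have s_down : ~ D < X (s j).
  rewrite (same_side _ _ (ray_tail_path hs hsj (leq_maxl j N2))).
  by have := hN2 _ (leq_maxr j N2); move=> ? ?; lra.
by apply: s_down; rewrite -(same_side _ _ hpath).
Qed.

(** * Groups without translations *)

Section TranslationFree.
Variable G : set (plane -> plane).
Hypothesis hG : isom_subgroup G.
Hypothesis G_translation_free : forall w, G (translation w) -> w = origin.

Lemma lin_id_group_id g : G g -> (forall w, lin g w = w) -> g = id.
Proof.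
move=> hg hl; have e := lin_translation_id (group_isometry hG hg) hl.
have /G_translation_free t0 : G (translation (g origin)) by rewrite -e.
by rewrite e t0; apply: funext => x; rewrite translationE addr0.
Qed.

Lemma group_lin_inj f f' : G f -> G f' -> (forall w, lin f w = lin f' w) -> f = f'.
Proof.
move=> hf hf' hl; have [h hh [hf'h f'h]] := group_inv hG hf'.
have fi := group_isometry hG hf; have f'i := group_isometry hG hf'.
have hi := group_isometry hG hh.
have fh : f \o h = id.
  apply: lin_id_group_id => [|w]; first exact: group_comp.
  by rewrite (lin_comp fi hi) hl -(lin_comp f'i hi) f'h lin_id.
by rewrite -[f]/(f \o id) -hf'h compA fh.
Qed.

Lemma group_det_inv g h : G g -> G h -> g \o h = id -> det g * det h = 1.
Proof.
by move=> hg hh e; rewrite -(det_comp (group_isometry hG hg) (group_isometry hG hh)) e det_id.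
Qed.

(* Conjugates of a rotation [r] are rotations commuting with [r] (their linear parts commute
   and [G] is determined by linear parts), so they share its unique fixed point. *)
Lemma rotation_center_fixed r c : G r -> det r = 1 -> r <> id -> r c = c ->
  forall h, G h -> h c = c.
Proof.
move=> hr d1 rn rc h hh; have [hi hhi [hih hhi']] := group_inv hG hh.
have ri := group_isometry hG hr; have hI := group_isometry hG hh.
have hiI := group_isometry hG hhi.
set r' := h \o (r \o hi).
have hr' : G r' by apply: group_comp => //; apply: group_comp.
have r'i := group_isometry hG hr'.
have d1' : det r' = 1.
  rewrite /r' (det_comp hI (isometry_comp ri hiI)) (det_comp ri hiI) d1 mul1r.
  exact: group_det_inv.
have hix x : hi (h x) = x by have := congr1 (fun F => F x) hih.
have rn' : ~ (forall w, lin r' w = w).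
  move=> /(lin_id_group_id hr') r'id; apply: rn; apply: funext => x.
  by have := congr1 (fun F => F (h x)) r'id; rewrite /r' /= hix => /(isometry_inj hI).
have [_ uniq] := rotation_fixpoint ri d1 (fun l => rn (lin_id_group_id hr l)).
have [_ uniq'] := rotation_fixpoint r'i d1' rn'.
have comm : r \o r' = r' \o r.
  apply: group_lin_inj; try by apply: group_comp.
  by move=> w; rewrite (lin_comp ri r'i) (lin_comp r'i ri) lin_rotation_comm.
have r'c : r' c = c.
  by apply: uniq => //; have /= := congr1 (fun F => F c) comm; rewrite rc.
by apply: uniq' r'c; rewrite /r' /= hix rc.
Qed.

Lemma rotation_free_two_elements : (forall r, G r -> det r = 1 -> r = id) ->
  exists g1, forall g, G g -> g = id \/ g = g1.
Proof.
move=> no_rot.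
have det_N1 k : G k -> k <> id -> det k = -1.
  by move=> hk kn; case: (det_pm1 (group_isometry hG hk)) => // /(no_rot _ hk).
case: (pselect (exists2 g1, G g1 & g1 <> id)) => [[g1 hg1 g1n] | only_id]; last first.
  by exists id => g hg; left; apply: contrapT => gn; apply: only_id; exists g.
exists g1 => g hg; case: (pselect (g = id)) => [|gn]; [by left | right].
have [h hh [hg1h g1h]] := group_inv hG hg1.
have hn : h <> id by move=> e; apply: g1n; rewrite -g1h e.
have gh : g \o h = id.
  apply: no_rot; first exact: group_comp.
  by rewrite (det_comp (group_isometry hG hg) (group_isometry hG hh)) !det_N1 // mulrNN mulr1.
by rewrite -[g]/(g \o id) -hg1h compA gh.
Qed.

Lemma translation_free_orbit_bounded v : exists C, forall g, G g -> in_box C (g v).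
Proof.
case: (pselect (exists r, [/\ G r, det r = 1 & r <> id])) => [[r [hr d1 rn]] | no_rot].
  have [[c rc] _] := rotation_fixpoint (group_isometry hG hr) d1
    (fun l => rn (lin_id_group_id hr l)).
  exists (`|c.1| + `|c.2| + Defs.edist v c) => g hg.
  have <- : Defs.edist (g v) c = Defs.edist v c.
    by rewrite -{1}(rotation_center_fixed hr d1 rn rc hg) (group_isometry hG hg).
  exact: in_box_edist.
have [g1 hg1] : exists g1, forall g, G g -> g = id \/ g = g1.
  apply: rotation_free_two_elements => r hr d1.
  by apply: contrapT => rn; apply: no_rot; exists r.
exists (`|v.1| + `|v.2| + `|(g1 v).1| + `|(g1 v).2|) => g hg.
have := normr_ge0 v.1; have := normr_ge0 v.2.
have := normr_ge0 (g1 v).1; have := normr_ge0 (g1 v).2.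
by case: (hg1 g hg) => -> /=; rewrite /in_box; split; lra.
Qed.

End TranslationFree.

(** * Groups whose translations are parallel *)

Lemma lin_axes g u : is_isometry g -> dot u u != 0 -> dot (lin g u) (perp u) = 0 ->
  exists l m : R, [/\ l ^+ 2 = 1, m ^+ 2 = 1 &
    forall w, dot (lin g w) u = l * dot w u /\ dot (lin g w) (perp u) = m * dot w (perp u)].
Proof.
move=> hg hu hY.
have unit_scale (k : R) : k * k * dot u u = dot u u -> k ^+ 2 = 1.
  by move=> /eqP; rewrite -subr_eq0 -{2}[dot u u]mul1r -mulrBl mulf_eq0 (negbTE hu) orbF
    subr_eq0 => /eqP.
set l := dot (lin g u) u / dot u u.
have lu : lin g u = dilate l u.
  apply: (dot_perp_inj hu); first by rewrite dot_dilatel /l mulfVK.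
  by rewrite hY dot_dilatel dot_perp mulr0.
have l2 : l ^+ 2 = 1.
  by apply: unit_scale; have := lin_dot hg u u; rewrite lu dot_dilatel dotC dot_dilatel mulrA.
set m := dot (lin g (perp u)) (perp u) / dot u u.
have lpu : lin g (perp u) = dilate m (perp u).
  apply: (dot_perp_inj hu).
    have := lin_dot hg (perp u) u; rewrite lu dot_dilater [dot (perp u) u]dotC dot_perp.
    move=> /eqP; rewrite mulf_eq0 => /orP[/eqP l0|/eqP ->].
      by move: l2; rewrite l0 expr0n /= => /eqP; rewrite eq_sym oner_eq0.
    by rewrite dot_dilatel dotC dot_perp mulr0.
  by rewrite dot_dilatel dot_perp_perp /m mulfVK.
have m2 : m ^+ 2 = 1.
  apply: unit_scale; have := lin_dot hg (perp u) (perp u).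
  by rewrite lpu dot_dilatel dotC dot_dilatel dot_perp_perp mulrA.
exists l, m; split => // w.
have := lin_dot hg w u; have := lin_dot hg w (perp u); rewrite lu lpu !dot_dilater.
move=> e1 e2; split; [rewrite -e2 | rewrite -e1]; by rewrite mulrA -expr2 ?l2 ?m2 mul1r.
Qed.

Section ParallelTranslations.
Variable G : set (plane -> plane).
Hypothesis hG : isom_subgroup G.
Variable u : plane.
Hypothesis u_neq0 : dot u u != 0.
Hypothesis G_u : G (translation u).
Hypothesis G_parallel : forall w, G (translation w) -> dot w (perp u) = 0.

Lemma group_lin_axes g : G g -> exists l m : R, [/\ l ^+ 2 = 1, m ^+ 2 = 1 &
  forall w, dot (lin g w) u = l * dot w u /\ dot (lin g w) (perp u) = m * dot w (perp u)].
Proof.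
move=> hg; apply: lin_axes (group_isometry hG hg) u_neq0 _.
by apply: G_parallel; apply: group_translation_conj.
Qed.

(* If [g] keeps the direction [perp u], then [g \o g] is a translation, necessarily along
   [u], so [g] cannot shift in the direction [perp u] either. *)
Lemma transverse_fix_or_flip g : G g ->
  (forall p, dot (g p) (perp u) = dot p (perp u)) \/
  (forall p, dot (g p) (perp u) = dot (g origin) (perp u) - dot p (perp u)).
Proof.
move=> hg; have gi := group_isometry hG hg.
have [l [m [l2 m2 axes]]] := group_lin_axes hg.
have /orP[/eqP m1 | /eqP m1] : (m == 1) || (m == -1) by rewrite -sqrf_eq1 m2.
  left; have ggi := isometry_comp gi gi.
  have lin_gg w : lin (g \o g) w = w.
    rewrite (lin_comp gi gi); apply: (dot_perp_inj u_neq0).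
      by rewrite !(proj1 (axes _)) mulrA -expr2 l2 mul1r.
    by rewrite !(proj2 (axes _)) m1 !mul1r.
  have gg_tr := lin_translation_id ggi lin_gg.
  have G_gg : G (translation ((g \o g) origin)) by rewrite -gg_tr; exact: group_comp.
  have := G_parallel G_gg.
  rewrite /= (dot_isometry gi) (proj2 (axes _)) m1 mul1r => t2.
  have t0 : dot (g origin) (perp u) = 0 by lra.
  by move=> p; rewrite (dot_isometry gi) (proj2 (axes _)) m1 mul1r t0 addr0.
by right => p; rewrite (dot_isometry gi) (proj2 (axes _)) m1 mulN1r addrC.
Qed.

(* All flipping elements of [G] reflect across the same line parallel to [u]. *)
Lemma transverse_offset : exists t0, forall g, G g -> forall p,
  dot (g p) (perp u) = dot p (perp u) \/ dot (g p) (perp u) = t0 - dot p (perp u).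
Proof.
case: (pselect (exists2 h, G h & ~ forall p, dot (h p) (perp u) = dot p (perp u)))
  => [[h hh h_flips] | all_fix]; last first.
  exists 0 => g hg p; left; apply: contrapT => g_moves; apply: all_fix.
  by exists g => // g_fix; apply: g_moves.
have {h_flips}h_flip : forall p, dot (h p) (perp u) = dot (h origin) (perp u) - dot p (perp u).
  by case: (transverse_fix_or_flip hh).
exists (dot (h origin) (perp u)) => g hg p.
case: (transverse_fix_or_flip hg) => g_flip; [by left | right].
rewrite g_flip; congr (_ - _).
have [gh_fix | gh_flip] := transverse_fix_or_flip (group_comp hG hg hh).
  by have /= := gh_fix origin; rewrite g_flip h_flip dot0l; lra.
have e1 := gh_flip origin; have e2 := gh_flip (perp u).
rewrite /= g_flip h_flip dot0l in e1; rewrite /= g_flip h_flip dot_perp_perp in e2.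
rewrite [dot (g (h origin)) _]g_flip [dot (h origin) _]h_flip dot0l in e2.
by move: u_neq0; rewrite (_ : dot u u = 0) //; lra.
Qed.

Lemma transverse_orbit_bounded v : exists B, forall g, G g -> `|dot (g v) (perp u)| <= B.
Proof.
have [t0 ht0] := transverse_offset; exists (`|dot v (perp u)| + `|t0|) => g hg.
case: (ht0 g hg v) => ->; first by rewrite lerDl.
by rewrite [X in _ <= X]addrC ler_normB.
Qed.

Lemma along_dist_invariant g p q : G g ->
  `|dot (g p) u - dot (g q) u| = `|dot p u - dot q u|.
Proof.
move=> hg; have gi := group_isometry hG hg.
have [l [m [l2 _ axes]]] := group_lin_axes hg.
rewrite [dot (g p) _](dot_isometry gi) [dot (g q) _](dot_isometry gi).
rewrite !(proj1 (axes _)) opprD addrACA subrr addr0 -mulrBr normrM.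
by rewrite (sqr_eq1_norm l2) mul1r.
Qed.

End ParallelTranslations.

(** * Two independent translations and discreteness *)

Lemma quasi_transitive_ubound (G : set (plane -> plane)) (M : embedded_graph)
    (Q : plane -> R -> Prop) :
  isom_subgroup G -> quasi_transitive G M ->
  (forall v, vert M v -> exists B, forall B', B <= B' -> forall g, G g -> Q (g v) B') ->
  exists B, forall p, vert M p -> Q p B.
Proof.
move=> hG [_ hfin] horb.
have orbit_bound O : [set O | exists2 v, vert M v & O = [set g v | g in G]] O ->
    exists B, forall B', B <= B' -> forall p, O p -> Q p B'.
  move=> [v hv ->]; have [B hB] := horb v hv.
  by exists B => B' hB' p [g hg <-]; apply: hB.
have [B hB] := finite_set_ubound hfin orbit_bound.
exists B => p hp; apply: (hB B (lexx B) [set g p | g in G]); first by exists p.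
by exists id => //; apply: group_id.
Qed.

Lemma translation_free_vertices_finite (G : set (plane -> plane)) (M : embedded_graph) :
  isom_subgroup G -> quasi_transitive G M -> locally_finite_vertices M ->
  (forall w, G (translation w) -> w = origin) -> finite_set (vert M).
Proof.
move=> hG hqt hlfv hT.
have [C hC] : exists C, forall p, vert M p -> in_box C p.
  apply: (quasi_transitive_ubound hG hqt) => v _.
  have [C hC] := translation_free_orbit_bounded hG hT v.
  by exists C => C' hC' g /hC[h1 h2]; split; apply: le_trans hC'.
apply: sub_finite_set (vertices_in_box_finite C hlfv) => p hp.
by split => //; apply: hC.
Qed.

Lemma edge_along_ubound (G : set (plane -> plane)) (M : embedded_graph) u :
  isom_subgroup G -> quasi_transitive G M -> locally_finite_graph M -> dot u u != 0 ->
  G (translation u) -> (forall w, G (translation w) -> dot w (perp u) = 0) ->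
  exists D, forall p q, adj M p q -> `|dot p u - dot q u| <= D.
Proof.
move=> hG hqt hlfg uu0 hu hpar.
have [D hD] : exists D, forall p, vert M p -> forall q, adj M p q -> `|dot p u - dot q u| <= D.
  apply: (quasi_transitive_ubound hG hqt) => v hv.
  have [B hB] := finite_set_ubound (Q := fun q B => `|dot v u - dot q u| <= B) (hlfg v hv)
    (fun q _ => ex_intro _ _ (fun B' hB' => hB')).
  exists B => B' hB' g hg q hq; have [gi hgi [gig ggi]] := group_inv hG hg.
  have hq' : adj M v (gi q).
    by have := act_adj hG hqt.1 hgi hq; rewrite -[gi (g v)]/((gi \o g) v) gig.
  rewrite -[in dot q u](_ : g (gi q) = q); last by rewrite -[g (gi q)]/((g \o gi) q) ggi.
  by rewrite (along_dist_invariant hG uu0 hu hpar) //; apply: hB.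
by exists D => p q hpq; apply: hD => //; case: hpq.
Qed.

Lemma vertices_transverse_ubound (G : set (plane -> plane)) (M : embedded_graph) u :
  isom_subgroup G -> quasi_transitive G M -> dot u u != 0 ->
  G (translation u) -> (forall w, G (translation w) -> dot w (perp u) = 0) ->
  exists B, forall p, vert M p -> `|dot p (perp u)| <= B.
Proof.
move=> hG hqt uu0 hu hpar; apply: (quasi_transitive_ubound hG hqt) => v _.
have [B hB] := transverse_orbit_bounded hG uu0 hu hpar v.
by exists B => B' hB' g hg; apply: le_trans (hB g hg) hB'.
Qed.

Lemma parallel_translations_two_ends (G : set (plane -> plane)) (M : embedded_graph) u v0 :
  isom_subgroup G -> quasi_transitive G M -> graph_connected M -> locally_finite_graph M ->
  locally_finite_vertices M -> vert M v0 ->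
  G (translation u) -> u <> origin -> (forall w, G (translation w) -> dot w (perp u) = 0) ->
  exists r s, [/\ is_ray M r, is_ray M s & ~ equiv_rays M r s].
Proof.
move=> hG hqt hconn hlfg hlfv hv0 hu u0 hpar.
have uu := dot_gt0 u0; have uu0 : dot u u != 0 by rewrite gt_eqF.
have [D hD] := edge_along_ubound hG hqt hlfg uu0 hu hpar.
have [BY hBY] := vertices_transverse_ubound hG hqt uu0 hu hpar.
have slab_finite : finite_set [set p | vert M p /\ `|dot p u| <= D].
  apply: sub_finite_set (vertices_in_box_finite _ hlfv) => p [hp hX].
  by split => //; apply: in_box_of_dots hX (hBY p hp).
have [r hr r_up] := translation_ray hG hqt.1 hconn hv0 hu u0.
have [s hs s_down] := translation_ray hG hqt.1 hconn hv0 (group_translationN hG hu)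
  (ltac:(by move=> /eqP; rewrite oppr_eq0 => /eqP)).
exists r, s; split => //; apply: (slab_separates_rays (X := fun p => dot p u) hD slab_finite) => //.
by move=> K; have [N hN] := s_down K; exists N => k /hN; rewrite dotNr.
Qed.

Lemma vert_nonempty (M : embedded_graph) : ~ finite_set (vert M) -> exists v, vert M v.
Proof.
move=> hinf; apply: contrapT => none; apply: hinf.
by rewrite (_ : vert M = set0) // predeqE => v; split => // hv; apply: none; exists v.
Qed.

Lemma two_independent_translations (G : set (plane -> plane)) (M : embedded_graph) :
  isom_subgroup G -> quasi_transitive G M -> graph_connected M -> ~ finite_set (vert M) ->
  locally_finite_graph M -> locally_finite_vertices M -> one_ended M ->
  exists u v, [/\ lin_indep2 u v, G (translation u) & G (translation v)].
Proof.
move=> hG hqt hconn hinf hlfg hlfv [_ hone]; apply: contrapT => no_pair.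
have [v0 hv0] := vert_nonempty hinf.
case: (pselect (exists2 u, G (translation u) & u <> origin)) => [[u hu u0] | no_tr].
  have hpar w : G (translation w) -> dot w (perp u) = 0.
    move=> hw; apply: contrapT => /eqP; rewrite dot_perp_cross => hc.
    by apply: no_pair; exists u, w; split => //; apply: cross_neq0_lin_indep2.
  have [r [s [hr hs not_eq]]] :=
    parallel_translations_two_ends hG hqt hconn hlfg hlfv hv0 hu u0 hpar.
  exact: not_eq (hone r s hr hs).
apply: hinf; apply: translation_free_vertices_finite hG hqt hlfv _ => w hw.
by apply: contrapT => w0; apply: no_tr; exists w.
Qed.

(* If [h] is close to [g] on a large ball, [g^-1 \o h] moves [v0], [v0 + u], [v0 + v] by less
   than the minimal spacing of the vertices in a box, hence fixes them and is the identity. *)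
Lemma discrete_of_independent_translations (G : set (plane -> plane)) (M : embedded_graph)
    u v v0 :
  isom_subgroup G -> acts_on G M -> locally_finite_vertices M -> vert M v0 ->
  lin_indep2 u v -> G (translation u) -> G (translation v) -> discrete_isom_group G.
Proof.
move=> hG hact hlfv hv0 huv hu hv g hg.
have hw2 : vert M (v0 + u) := act_vert hact hu hv0.
have hw3 : vert M (v0 + v) := act_vert hact hv hv0.
set r := Defs.edist v0 origin + Defs.edist (v0 + u) origin + Defs.edist (v0 + v) origin.
have edist_ge0 p : 0 <= Defs.edist p origin by apply: sqrtr_ge0.
have := edist_ge0 v0; have := edist_ge0 (v0 + u); have := edist_ge0 (v0 + v) => n3 n2 n1.
have r0 : 0 <= r by rewrite /r; lra.
set C := 2 * r + 1.
have [e e0 sep] := finite_set_separated (vertices_in_box_finite C hlfv).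
exists r, (Num.min e 1); split; first by rewrite lt_min e0 ltr01.
move=> h hh close; have [gi hgi [gig ggi]] := group_inv hG hg.
have k_fix w : vert M w -> Defs.edist w origin <= r -> (gi \o h) w = w.
  move=> hw wr.
  have kw_close : Defs.edist ((gi \o h) w) w < Num.min e 1.
    rewrite /= -{2}[w]/(id w) -gig /= (group_isometry hG hgi); exact: close.
  have [c1 c2] := in_box_edist w origin; rewrite [origin.1]/= [origin.2]/= normr0 !add0r in c1 c2.
  have [b1 b2] := in_box_edist ((gi \o h) w) w.
  have [m1 m2] : Num.min e 1 <= e /\ Num.min e 1 <= 1 by split; rewrite ge_min lexx ?orbT.
  have k_vert : vert M ((gi \o h) w) := act_vert hact hgi (act_vert hact hh hw).
  have box_kw : in_box C ((gi \o h) w) by rewrite /C; split; lra.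
  have box_w : in_box C w by rewrite /C; split; lra.
  apply: contrapT => kw.
  by have := sep _ _ (conj k_vert box_kw) (conj hw box_w) kw; lra.
have k_id : gi \o h = id.
  apply: (isometry_fixing_triangle (w := v0)
    (isometry_comp (group_isometry hG hgi) (group_isometry hG hh)) (lin_indep2_cross_neq0 huv));
    apply: k_fix => //; rewrite /r; lra.
by rewrite -[h]/(id \o h) -ggi -compA k_id.
Qed.

Theorem lemma3p1 (M : embedded_graph) (G : set (plane -> plane)) :
  is_map M -> locally_finite_graph M -> one_ended M ->
  locally_finite_vertices M ->
  isom_subgroup G -> quasi_transitive G M ->
  wallpaper_group G.
Proof.
move=> [_ [hconn hinf _]] hlfg hone hlfv hG hqt.
have [u [v [huv hu hv]]] :=
  two_independent_translations hG hqt hconn hinf hlfg hlfv hone.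
have [v0 hv0] := vert_nonempty hinf.
split => //; last by exists u, v.
exact: discrete_of_independent_translations hG hqt.1 hlfv hv0 huv hu hv.
Qed.
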